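(* Let $\hat n_1=(0,0,1)$, $\hat n_2=(\tfrac{\sqrt3}{2},0,-\tfrac12)$, $\hat n_3=(-\tfrac{\sqrt3}{2},0,-\tfrac12)$, $\eta=\sqrt3-1$, and $\mathcal{M}_k$ the qubit POVM $\{E^k_\pm=\tfrac12\mathbf{1}\pm\tfrac\eta2\vec\sigma\cdot\hat n_k\}$. For each pair $j\neq k$ let $\mathcal{M}_{jk}$ be the POVM $\{F_{X_jX_k}=w_{X_jX_k}\Pi_{X_jX_k}\}$ with $w_{++}=w_{--}=\frac1{\sqrt3+1}$, $w_{+-}=w_{-+}=\frac{\sqrt3}{\sqrt3+1}$, and $\Pi_{X_jX_k}=\tfrac12\mathbf{1}+\tfrac12\vec\sigma\cdot\hat m_{X_jX_k}$ with $\hat m_{X_jX_k}$ the unit vector along $X_j\hat n_j+X_k\hat n_k$ (a joint measurement of $\mathcal{M}_j,\mathcal{M}_k$). Then for every quantum state the probability of anti-correlated outcomes in $\mathcal{M}_{jk}$ equals $\frac{\sqrt3}{\sqrt3+1}$; in particular $R_3=\tfrac13\sum_{j<k}p(X_j\neq X_k|\mathcal{M}_{jk})=\frac{\sqrt3}{\sqrt3+1}\approx0.63397$, independent of the state.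
   Context: $\vec\sigma=(\sigma_x,\sigma_y,\sigma_z)$ are the Pauli matrices; a POVM with effects $E_X$ yields outcome $X$ on state $\rho$ with probability $\mathrm{Tr}(\rho E_X)$. *)

From mathcomp Require Import all_boot all_order all_algebra algC.
Set Implicit Arguments. Unset Strict Implicit. Unset Printing Implicit Defensive.
Import Order.TTheory GRing.Theory Num.Theory.
Local Open Scope ring_scope.

Definition sqrt3 : algC := sqrtC 3.
Definition eta : algC := sqrt3 - 1.

Definition sgn (b : bool) : algC := if b then 1 else -1.

Definition pauli (a : 'I_3) : 'M[algC]_2 :=
  \matrix_(r < 2, c < 2)
    match val a, val r, val c with
    | 0, 0, 1 => 1 | 0, 1, 0 => 1
    | 1, 0, 1 => - 'i | 1, 1, 0 => 'i
    | 2, 0, 0 => 1 | 2, 1, 1 => -1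
    | _, _, _ => 0
    end.

Definition sdot (v : 'I_3 -> algC) : 'M[algC]_2 := \sum_(a < 3) v a *: pauli a.

(* the unit vectors n_1, n_2, n_3 (indexed 0,1,2), components x,y,z *)
Definition nvec (k a : 'I_3) : algC :=
  match val k, val a with
  | 0, 2 => 1
  | 1, 0 => sqrt3 / 2
  | 1, 2 => - (1 / 2)
  | 2, 0 => - (sqrt3 / 2)
  | 2, 2 => - (1 / 2)
  | _, _ => 0
  end.

Definition E (k : 'I_3) (x : bool) : 'M[algC]_2 :=
  2^-1 *: 1%:M + (sgn x * eta / 2) *: sdot (nvec k).

Definition mvec (j k : 'I_3) (xj xk : bool) (a : 'I_3) : algC :=
  let v := fun b : 'I_3 => sgn xj * nvec j b + sgn xk * nvec k b in
  v a / sqrtC (\sum_(b < 3) v b ^+ 2).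

Definition w (xj xk : bool) : algC :=
  if xj == xk then 1 / (sqrt3 + 1) else sqrt3 / (sqrt3 + 1).

Definition Pi (j k : 'I_3) (xj xk : bool) : 'M[algC]_2 :=
  2^-1 *: 1%:M + 2^-1 *: sdot (mvec j k xj xk).

Definition F (j k : 'I_3) (xj xk : bool) : 'M[algC]_2 := w xj xk *: Pi j k xj xk.

Definition is_state (rho : 'M[algC]_2) : Prop :=
  [/\ (map_mx Num.conj rho)^T = rho,
      (forall v : 'cV[algC]_2, 0 <= ((map_mx Num.conj v)^T *m rho *m v) 0 0)
    & \tr rho = 1].

Definition prob (rho E : 'M[algC]_2) : algC := \tr (rho *m E).

Definition p_anti (rho : 'M[algC]_2) (j k : 'I_3) : algC :=
  prob rho (F j k true false) + prob rho (F j k false true).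

Definition R3 (rho : 'M[algC]_2) : algC :=
  3^-1 * \sum_(j < 3) \sum_(k < 3 | (j < k)%N) p_anti rho j k.

From mathcomp Require Import all_boot all_order all_algebra algC.
Import Order.TTheory GRing.Theory Num.Theory.
Local Open Scope ring_scope.

(* The two anti-correlated projectors of M_jk point along opposite directions
   X_j n_j + X_k n_k and -(X_j n_j + X_k n_k), so they sum to the identity; as
   they also carry the same weight sqrt3 / (sqrt3 + 1), the anti-correlation
   probability is that weight times tr rho = 1, whatever the state. *)

Lemma eq_sdot {u v : 'I_3 -> algC} : u =1 v -> sdot u = sdot v.
Proof. by move=> uv; apply: eq_bigr => a _; rewrite uv. Qed.

Lemma sdotN (v : 'I_3 -> algC) : sdot (fun a => - v a) = - sdot v.
Proof. by rewrite /sdot -sumrN; apply: eq_bigr => a _; rewrite scaleNr. Qed.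

Lemma mvec_anti_opp j k : mvec j k false true =1 (fun a => - mvec j k true false a).
Proof.
move=> a; rewrite /mvec /sgn.
rewrite [in LHS](eq_bigr (fun b => (1 * nvec j b + -1 * nvec k b) ^+ 2)) => [|b _].
  by rewrite -mulNr !mul1r !mulN1r opprD opprK addrC.
by rewrite -sqrrN !mul1r !mulN1r opprD opprK.
Qed.

Lemma Pi_anti_sum j k : Pi j k true false + Pi j k false true = 1%:M.
Proof.
rewrite /Pi (eq_sdot (mvec_anti_opp j k)) sdotN scalerN addrACA subrr addr0.
by rewrite -scalerDl -[2^-1]mul1r -splitr scale1r.
Qed.

Lemma probD rho A B : prob rho (A + B) = prob rho A + prob rho B.
Proof. by rewrite /prob mulmxDr mxtraceD. Qed.

Lemma probZ rho c A : prob rho (c *: A) = c * prob rho A.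
Proof. by rewrite /prob -scalemxAr mxtraceZ. Qed.

Lemma p_anti_tr rho j k : p_anti rho j k = sqrt3 / (sqrt3 + 1) * \tr rho.
Proof. by rewrite /p_anti /F /w /= !probZ -mulrDr -probD Pi_anti_sum /prob mulmx1. Qed.

Lemma sum_lt_pairs3 (c : algC) : \sum_(j < 3) \sum_(k < 3 | (j < k)%N) c = 3 * c.
Proof.
under eq_bigr => j _ do rewrite big_mkcond.
by rewrite !big_ord_recr !big_ord0 /= !add0r !addr0 -!mulr2n -mulrSr mulr_natl.
Qed.

Theorem proposition4 (rho : 'M[algC]_2) :
  is_state rho ->
  (forall j k : 'I_3, j != k -> p_anti rho j k = sqrt3 / (sqrt3 + 1)) /\
  R3 rho = sqrt3 / (sqrt3 + 1).
Proof.
case=> _ _ tr_rho.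
have p_anti_const j k : p_anti rho j k = sqrt3 / (sqrt3 + 1).
  by rewrite p_anti_tr tr_rho mulr1.
split=> [j k _|]; first exact: p_anti_const.
rewrite /R3.
under eq_bigr => j _ do under eq_bigr => k _ do rewrite p_anti_const.
by rewrite sum_lt_pairs3 mulKf ?pnatr_eq0.
Qed.
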